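(* Let $F$ be a Henselian discrete valuation field with ring of integers $\mathcal{O}_F$, uniformizer $t$, and infinite residue field $K$; write $x\mapsto\bar{x}$ for the residue map. Let $q\in\mathcal{O}_F[X]$ be a polynomial of degree $\ge1$ such that $q'$ has non-zero image in $K[X]$, and let $A\in\{1,2\}$. Then there exist finitely many $b_1,\dots,b_m\in\mathcal{O}_F$ such that whenever $b\in\mathcal{O}_F$ and the set $\{x\in\mathcal{O}_F:q(x)\in b+t^A\mathcal{O}_F,\ \bar{q}'(\bar{x})=0\}$ is non-empty, we have $b\equiv b_i\bmod t^A\mathcal{O}_F$ for some $i\in\{1,\dots,m\}$.
   Context: $\bar{q}$ denotes the image of $q$ in $K[X]$. *)

From HB Require Import structures.
From mathcomp Require Import all_boot all_order all_algebra.
Set Implicit Arguments. Unset Strict Implicit. Unset Printing Implicit Defensive.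
Import Order.TTheory GRing.Theory Num.Theory.
Local Open Scope ring_scope.

(* A discrete valuation on a field F, given as v : F -> int on nonzero
   elements (the value at 0, conventionally +oo, is never consulted). *)
Definition discrete_valuation (F : fieldType) (v : F -> int) : Prop :=
  [/\ forall x y : F, x != 0 -> y != 0 -> v (x * y) = v x + v y,
      forall x y : F, x != 0 -> y != 0 -> x + y != 0 ->
                      Num.min (v x) (v y) <= v (x + y)
    & exists t : F, t != 0 /\ v t = 1].

Definition int_ring (F : fieldType) (v : F -> int) (x : F) : Prop :=
  x = 0 \/ 0 <= v x.

Definition max_ideal (F : fieldType) (v : F -> int) (x : F) : Prop :=
  x = 0 \/ 0 < v x.

Definition uniformizer (F : fieldType) (v : F -> int) (t : F) : Prop :=
  t != 0 /\ v t = 1.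

Definition poly_over_O (F : fieldType) (v : F -> int) (p : {poly F}) : Prop :=
  forall i, int_ring v p`_i.

Definition henselian (F : fieldType) (v : F -> int) : Prop :=
  forall (p : {poly F}) (a : F),
    p \is monic -> poly_over_O v p -> int_ring v a ->
    max_ideal v p.[a] -> ~ max_ideal v (p^`()).[a] ->
    exists b : F, [/\ int_ring v b, p.[b] = 0 & max_ideal v (b - a)].

Definition infinite_residue_field (F : fieldType) (v : F -> int) : Prop :=
  exists f : nat -> F, (forall n, int_ring v (f n)) /\
    (forall n m, n != m -> ~ max_ideal v (f n - f m)).

Definition in_tpow_ideal (F : fieldType) (v : F -> int) (t : F) (A : nat)
  (y : F) : Prop :=
  exists z : F, int_ring v z /\ y = t ^+ A * z.

(* the image of p in K[X] is non-zero: some coefficient is not in m_F *)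
Definition nonzero_residue_poly (F : fieldType) (v : F -> int) (p : {poly F})
  : Prop := exists i, ~ max_ideal v p`_i.

From HB Require Import structures.
From mathcomp Require Import all_boot all_order all_algebra.
From mathcomp Require Import ring zify.
From Stdlib Require Import Classical.
Import Order.TTheory GRing.Theory Num.Theory.
Local Open Scope ring_scope.

(* Since the residue polynomial of q' is non-zero, it has finitely many roots
   in the residue field, so finitely many a_1, ..., a_m in O_F represent
   every residue root of q'.  If x is a residue root of q', then x = a_i + h
   with h in m_F and q'(a_i) in m_F, so the Taylor expansion
   q(x) = q(a_i) + h q'(a_i) + h^2 r gives q(x) = q(a_i) mod t^2; hence
   b_i := q(a_i) work for A <= 2. *)

Section DiscreteValuation.
Context {F : fieldType} {v : F -> int}.
Hypothesis dv : discrete_valuation v.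

Definition val_ge (n : int) (x : F) : Prop := x = 0 \/ n <= v x.

Lemma valM x y : x != 0 -> y != 0 -> v (x * y) = v x + v y.
Proof. by case: dv => valM _ _; apply: valM. Qed.

Lemma val1 : v 1 = 0.
Proof.
by have := @valM 1 1 (oner_neq0 F) (oner_neq0 F); rewrite mulr1; lia.
Qed.

Lemma valN x : x != 0 -> v (- x) = v x.
Proof.
move=> nx; have n1 : (-1 : F) != 0 by rewrite oppr_eq0 oner_eq0.
have := @valM (-1) (-1) n1 n1; rewrite mulrNN mulr1 val1 => h.
by rewrite -mulN1r valM //; lia.
Qed.

Lemma val_ge_le {m n x} : m <= n -> val_ge n x -> val_ge m x.
Proof. by move=> mn [->|h]; [left | right; apply: le_trans h]. Qed.

Lemma val_geD {n x y} : val_ge n x -> val_ge n y -> val_ge n (x + y).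
Proof.
have [->|nx] := eqVneq x 0; first by rewrite add0r.
have [->|ny] := eqVneq y 0; first by rewrite addr0.
case=> [/eqP|hx]; first by rewrite (negbTE nx).
case=> [/eqP|hy]; first by rewrite (negbTE ny).
have [->|nxy] := eqVneq (x + y) 0; [by left | right].
case: dv => _ val_min _; apply: le_trans (val_min x y nx ny nxy).
by rewrite le_min hx hy.
Qed.

Lemma val_geN {n x} : val_ge n x -> val_ge n (- x).
Proof.
have [->|nx] := eqVneq x 0; first by rewrite oppr0; left.
by case=> [/eqP|hx]; [rewrite (negbTE nx) | right; rewrite valN].
Qed.

Lemma val_geB {n x y} : val_ge n x -> val_ge n y -> val_ge n (x - y).
Proof. by move=> hx /val_geN; apply: val_geD. Qed.

Lemma val_geM {m n x y} : val_ge m x -> val_ge n y -> val_ge (m + n) (x * y).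
Proof.
case=> [->|hx]; first by rewrite mul0r; left.
case=> [->|hy]; first by rewrite mulr0; left.
have [->|nx] := eqVneq x 0; first by rewrite mul0r; left.
have [->|ny] := eqVneq y 0; first by rewrite mulr0; left.
by right; rewrite valM // lerD.
Qed.

Lemma val_geMl {n x y} : val_ge 0 x -> val_ge n y -> val_ge n (x * y).
Proof. by move=> hx /(val_geM hx); rewrite add0r. Qed.

Lemma val_geMr {n x y} : val_ge n x -> val_ge 0 y -> val_ge n (x * y).
Proof. by move=> hx /(val_geM hx); rewrite addr0. Qed.

Lemma val_ge0_unit {x} : val_ge 0 x -> ~ val_ge 1 x -> x != 0 /\ v x = 0.
Proof.
case=> [-> /(_ (or_introl erefl))//|hx nx1].
have nx : x != 0 by apply: contra_notN nx1 => /eqP ->; left.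
split=> //; apply/eqP; rewrite eq_le hx andbT leNgt.
by apply: contra_notN nx1; right.
Qed.

Lemma val_ge_cancel {n x u} : val_ge n (x * u) -> u != 0 -> v u = 0 -> val_ge n x.
Proof.
move=> hxu nu vu; case: hxu => [/eqP|h].
  by rewrite mulf_eq0 (negbTE nu) orbF => /eqP ->; left.
have [->|nx] := eqVneq x 0; first by left.
by right; move: h; rewrite valM // vu addr0.
Qed.

Lemma max_idealE x : max_ideal v x <-> val_ge 1 x.
Proof. by rewrite /max_ideal /val_ge gtz0_ge1. Qed.

Lemma in_tpow_idealP {t} {A : nat} {y} :
  uniformizer v t -> in_tpow_ideal v t A y <-> val_ge A y.
Proof.
case=> nt vt; have ntA : t ^+ A != 0 by rewrite expf_neq0.
have vtA : v (t ^+ A) = A.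
  elim: A {ntA} => [|n IH]; first by rewrite val1.
  by rewrite exprS valM ?expf_neq0 // vt IH intS.
split=> [[z [hz ->]]|hy].
  by apply: val_geMr hz; right; rewrite vtA.
have [->|ny] := eqVneq y 0; first by exists 0; split; [left | rewrite mulr0].
have yE : y = t ^+ A * (y / t ^+ A) by rewrite mulrC divfK.
exists (y / t ^+ A); split=> //; right.
have nz : y / t ^+ A != 0 by rewrite mulf_neq0 ?invr_eq0.
case: hy => [/eqP|]; first by rewrite (negbTE ny).
by rewrite {1}yE valM // vtA lerDl.
Qed.

Lemma val_ge0_nat k : val_ge 0 k%:R.
Proof.
elim: k => [|k IH]; first by left.
by rewrite -addn1 natrD; apply: val_geD => //; right; rewrite val1.
Qed.

Lemma val_ge0_exp x k : val_ge 0 x -> val_ge 0 (x ^+ k).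
Proof.
move=> hx; elim: k => [|k IH]; first by right; rewrite val1.
by rewrite exprS; apply: val_geMl.
Qed.

Lemma val_ge0_horner p a : poly_over_O v p -> val_ge 0 a -> val_ge 0 p.[a].
Proof.
move=> hp ha; rewrite horner_coef.
apply: (big_ind (val_ge 0)); [by left | by move=> *; apply: val_geD |] => i _.
exact: val_geMl (hp i) (val_ge0_exp _ i ha).
Qed.

Lemma poly_over_O_deriv {p} : poly_over_O v p -> poly_over_O v p^`().
Proof.
by move=> hp i; rewrite coef_deriv -mulr_natr; exact: val_geMr (hp _) (val_ge0_nat _).
Qed.

Lemma horner_taylor2 {p a h} : poly_over_O v p -> val_ge 0 a -> val_ge 0 h ->
  exists2 r, val_ge 0 r & p.[a + h] = p.[a] + h * p^`().[a] + h ^+ 2 * r.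
Proof.
move=> + ha hh; elim/poly_ind: p => [|p c IH] hpc.
  by exists 0; [left | rewrite deriv0 !horner0 !mulr0 !addr0].
have hp : poly_over_O v p.
  by move=> i; have := hpc i.+1; rewrite coefD coefMX coefC /= addr0.
have [r hr e] := IH hp; exists (p^`().[a] + r * (a + h)).
  apply: val_geD; first exact: val_ge0_horner (poly_over_O_deriv hp) ha.
  by apply: val_geMr hr (val_geD ha hh).
by rewrite derivMXaddC !hornerMXaddC hornerD hornerM hornerX e; ring.
Qed.

Lemma val_ge2_hornerB {q x a} : poly_over_O v q -> val_ge 0 a -> val_ge 0 x ->
  val_ge 1 (x - a) -> val_ge 1 q^`().[a] -> val_ge 2 (q.[x] - q.[a]).
Proof.
move=> hq ha hx hxa hq'a.
have [r hr] := horner_taylor2 hq ha (val_geB hx ha).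
rewrite addrC subrK => ->; rewrite addrAC (addrAC q.[a]) subrr add0r expr2.
apply: val_geD; first exact: val_geM hxa hq'a.
exact: val_geMr (val_geM hxa hxa) hr.
Qed.

Lemma coef_mulXsubC (s : {poly F}) a i :
  (s * ('X - a%:P))`_i = (if i == 0%N then 0 else s`_i.-1) - s`_i * a.
Proof. by rewrite mulrBr coefB coefMX coefMC. Qed.

Lemma poly_over_O_divXsubC {p s a} : poly_over_O v p -> val_ge 0 a ->
  p = s * ('X - a%:P) -> poly_over_O v s.
Proof.
move=> hp ha pE.
suff coef_s k i : (size s <= i + k)%N -> val_ge 0 s`_i.
  by move=> i; apply: (coef_s (size s)); rewrite leq_addl.
elim: k i => [|k IH] i hi; first by rewrite nth_default; [left | rewrite addn0 in hi].
have -> : s`_i = p`_i.+1 + s`_i.+1 * a by rewrite pE coef_mulXsubC /= subrK.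
apply: val_geD (hp _) (val_geMr (IH i.+1 _) ha).
by rewrite addSn -addnS.
Qed.

Definition residue_root p x := val_ge 0 x /\ val_ge 1 p.[x].

Fixpoint residue_distinct (L : seq F) : Prop :=
  if L is x :: L' then (forall y, y \in L' -> ~ val_ge 1 (x - y)) /\
                       residue_distinct L'
  else True.

Lemma residue_root_divXsubC {p s x y} : poly_over_O v p ->
  residue_root p x -> residue_root p y -> ~ val_ge 1 (y - x) ->
  p - p.[x]%:P = s * ('X - x%:P) -> val_ge 1 s.[y].
Proof.
move=> hp [hx hpx] [hy hpy] nyx pE.
have syE : s.[y] * (y - x) = p.[y] - p.[x].
  by have := congr1 (horner^~ y) pE; rewrite /= !hornerE => <-.
have [nz vyx] := val_ge0_unit (val_geB hy hx) nyx.
by apply: (val_ge_cancel _ nz vyx); rewrite syE; apply: val_geB.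
Qed.

Lemma max_ideal_coef_mulXsubC_addC (s : {poly F}) x c :
  val_ge 0 x -> val_ge 1 c -> (forall i, val_ge 1 s`_i) ->
  forall i, val_ge 1 (s * ('X - x%:P) + c%:P)`_i.
Proof.
move=> hx hc hs i; rewrite coefD coef_mulXsubC coefC.
case: i => [|j] /=; last by rewrite addr0; apply: val_geB (hs _) (val_geMr _ hx).
by apply: val_geD hc; rewrite sub0r; apply/val_geN/val_geMr.
Qed.

Lemma residue_roots_max_ideal_coef {L p} : residue_distinct L ->
  poly_over_O v p -> (forall x, x \in L -> residue_root p x) ->
  (size p <= size L)%N -> forall i, val_ge 1 p`_i.
Proof.
elim: L p => [|x L IH] p /= hL hp hroots hsize.
  by move: hsize; rewrite leqn0 size_poly_eq0 => /eqP ->; left; rewrite coef0.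
case: hL => hxL hL; have [hx hpx] := hroots x (mem_head _ _).
have : root (p - p.[x]%:P) x by rewrite /root !hornerE subrr.
case/factor_theorem => s pE.
have hs : poly_over_O v s.
  apply: (poly_over_O_divXsubC _ hx pE) => j; rewrite coefB coefC.
  by apply: (val_geB (hp j)); case: eqP => _; [apply: val_ge0_horner | left].
have size_s : (size s <= size L)%N.
  have [->|ns] := eqVneq s 0; first by rewrite size_poly0.
  have := size_polyD p (- p.[x]%:P); rewrite size_polyN pE.
  rewrite size_mul ?polyXsubC_eq0 // size_XsubC addn2 /= => h.
  rewrite -ltnS; apply: leq_trans h _; rewrite geq_max hsize /=.
  exact: leq_trans (size_polyC_leq1 _) _.
have hsL y : y \in L -> residue_root s y.
  move=> yL; have ry := hroots y ltac:(by rewrite inE yL orbT).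
  split; first by case: ry.
  apply: residue_root_divXsubC hp (conj hx hpx) ry _ pE.
  by move=> /val_geN; rewrite opprB; apply: hxL.
have -> : p = s * ('X - x%:P) + p.[x]%:P by rewrite -pE subrK.
exact: max_ideal_coef_mulXsubC_addC (IH s hL hs hsL size_s).
Qed.

Lemma residue_roots_cover {p} : poly_over_O v p -> nonzero_residue_poly v p ->
  exists L : seq F, (forall a, a \in L -> residue_root p a) /\
    forall x, residue_root p x -> exists2 a, a \in L & val_ge 1 (x - a).
Proof.
move=> hp [i /max_idealE nzi].
pose admissible L := residue_distinct L /\ forall a, a \in L -> residue_root p a.
apply: NNPP => no_cover.
(* Without a finite cover, residue-distinct lists of residue roots could be
   extended indefinitely, contradicting the degree bound. *)
suff [L [[hL hroots] sizeL]] : exists L, admissible L /\ size L = size p.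
  by apply: nzi; apply: (residue_roots_max_ideal_coef hL hp hroots); rewrite sizeL.
elim: (size p) => [|n [L [[hL hroots] sizeL]]]; first by exists [::].
have [x [rx nx]] : exists x,
    residue_root p x /\ ~ exists2 a, a \in L & val_ge 1 (x - a).
  apply: NNPP => none; apply: no_cover; exists L; split=> // x rx.
  by apply: NNPP => nx; apply: none; exists x.
exists (x :: L); split; last by rewrite /= sizeL.
split; first by split=> // y yL hxy; apply: nx; exists y.
by move=> a; rewrite inE => /orP [/eqP ->|/hroots].
Qed.

End DiscreteValuation.

Arguments val_ge {F} v n x.
Arguments residue_root {F} v p x.
Arguments residue_distinct {F} v L.

Theorem lemma4p7 (F : fieldType) (v : F -> int) (t : F) (q : {poly F})
    (A : nat) :
  discrete_valuation v -> henselian v -> infinite_residue_field v ->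
  uniformizer v t ->
  poly_over_O v q -> (1 < size q)%N ->
  nonzero_residue_poly v (q^`()) ->
  (A = 1%N \/ A = 2%N) ->
  exists bs : seq F,
    (forall bi, bi \in bs -> int_ring v bi) /\
    forall b : F, int_ring v b ->
      (exists x : F, [/\ int_ring v x, in_tpow_ideal v t A (q.[x] - b)
                        & max_ideal v (q^`()).[x]]) ->
      exists2 bi, bi \in bs & in_tpow_ideal v t A (b - bi).
Proof.
move=> dv _ _ ut hq _ hq' hA.
have [L [hroots cover]] := residue_roots_cover dv (poly_over_O_deriv dv hq) hq'.
exists [seq q.[a] | a <- L]; split.
  by move=> _ /mapP [a /hroots [ha _] ->]; apply: val_ge0_horner.
move=> b _ [x [hx hxb /max_idealE hq'x]].
have {}hxb := (in_tpow_idealP dv ut).1 hxb.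
have [a aL hxa] := cover x (conj hx hq'x); have [ha hq'a] := hroots a aL.
exists q.[a]; first exact: map_f.
apply/(in_tpow_idealP dv ut).
have -> : b - q.[a] = (q.[x] - q.[a]) - (q.[x] - b) by ring.
apply: (val_geB dv _ hxb).
apply: (val_ge_le _ (val_ge2_hornerB dv hq ha hx hxa hq'a)).
by case: hA => ->.
Qed.
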